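(* Let $$F(x)=\sum_{n\ge0}t^n\sum_{(P,Q)\in\mathcal{I}_n}x^{\mathrm{contact}(P)},\qquad H(x)\equiv H(t,x,s)=\sum_{n\ge0}t^n\sum_{(P,Q)\in\mathcal{I}_n}x^{\mathrm{contact}(P)}\sum_{i=0}^{2n}s^{Q(i)},$$ and write $F(1),H(1)$ for their specializations at $x=1$. Then $$H(x)=F(x)+sxtF(x)\frac{H(x)-H(1)}{x-1}+xtH(x)\frac{F(x)-F(1)}{x-1}.$$
   Context: A Dyck path of size $n$ is a lattice path from $(0,0)$ to $(2n,0)$ with $n$ up-steps $(1,1)$ and $n$ down-steps $(1,-1)$ never going below height $0$; $\mathcal{D}_n$ is their set; $Q(i)$ denotes the height of $Q$ at abscissa $i$. A contact of a path is a vertex of the path lying on the $x$-axis (including both endpoints); $\mathrm{contact}(P)$ is the number of contacts of $P$. The Tamari order on $\mathcal{D}_n$ is the reflexive transitive closure of the relation: if $P$ has a down-step $d$ immediately followed by an up-step and $\mathfrak{e}$ is the shortest excursion following $d$ (a subpath staying strictly above its starting height except at its last point), the path obtained by exchanging $d$ and $\mathfrak{e}$ is larger than $P$. $\mathcal{I}_n$ is the set of pairs $(P,Q)\in\mathcal{D}_n^2$ with $P\le Q$ (Tamari intervals; $P$ lower path, $Q$ upper path). The series are formal power series in $t$. *)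

From mathcomp Require Import all_boot all_algebra.
Set Implicit Arguments. Unset Strict Implicit. Unset Printing Implicit Defensive.
Import GRing.Theory Num.Theory.
Local Open Scope ring_scope.

(* A lattice path is a seq bool: true = up-step (1,1), false = down-step (1,-1). *)
Definition step_val (b : bool) : int := if b then 1 else -1.

Definition height (P : seq bool) (i : nat) : int := \sum_(b <- take i P) step_val b.

Definition is_dyck (n : nat) (P : seq bool) : bool :=
  [&& size P == (2 * n)%N,
      all (fun i => 0 <= height P i) (iota 0 (size P).+1)
    & height P (size P) == 0].

Definition contact (P : seq bool) : nat :=
  count (fun i => height P i == 0) (iota 0 (size P).+1).

(* If step j of P is a down-step d immediately followed by an up-step, exchange d
   with the shortest excursion e following d (steps j+1 .. k-1, where k is the
   first abscissa > j+1 at which the height returns to the height after d). *)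
Definition rotate (P : seq bool) (j : nat) : option (seq bool) :=
  if (nth true P j == false) && (nth false P j.+1 == true) then
    let h := height P j.+1 in
    match [seq k <- iota j.+2 (size P - j.+1) | height P k == h] with
    | k :: _ => Some (take j P ++ drop j.+1 (take k P) ++ false :: drop k P)
    | [::] => None
    end
  else None.

Definition tam_step (P Q : seq bool) : bool :=
  has (fun j => rotate P j == Some Q) (iota 0 (size P)).

Definition tamari_le (n : nat) (P Q : (2 * n).-tuple bool) : bool :=
  connect [rel A B : (2 * n).-tuple bool | [&& is_dyck n A, is_dyck n B & tam_step A B]] P Q.

(* Polynomials in x (outer variable) with coefficients polynomials in s (inner variable). *)
Notation bipoly := {poly {poly int}}.

(* coefficient of t^n in F(x) *)
Definition Fcoef (n : nat) : bipoly :=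
  \sum_(P : (2 * n).-tuple bool | is_dyck n P)
    \sum_(Q : (2 * n).-tuple bool | is_dyck n Q && tamari_le P Q)
      'X ^+ contact P.

(* coefficient of t^n in H(x) = H(t,x,s) *)
Definition Hcoef (n : nat) : bipoly :=
  \sum_(P : (2 * n).-tuple bool | is_dyck n P)
    \sum_(Q : (2 * n).-tuple bool | is_dyck n Q && tamari_le P Q)
      ('X ^+ contact P * \sum_(i < (2 * n).+1) (('X : {poly int}) ^+ `|height Q i|%N)%:P).

(* divided difference (p(x) - p(1)) / (x - 1), an exact polynomial division *)
Definition ddiff (p : bipoly) : bipoly := (p - (p.[1])%:P) %/ ('X - 1).

From mathcomp Require Import all_boot all_algebra.
From mathcomp Require Import zify ring.
From Stdlib Require Import Relation_Operators.
Import GRing.Theory Num.Theory.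
Local Open Scope ring_scope.

Set Implicit Arguments. Unset Strict Implicit. Unset Printing Implicit Defensive.

(* Cut the upper path at its last return, Q = Q1 u Q2 d.  Heights only grow along
   the Tamari order, so every P <= Q touches the axis at |Q1| as well, and rotations
   never cross such a common contact: P = P1 u X d Y with P1 <= Q1 and
   u X d Y <= u Q2 d, which is equivalent to X Y <= Q2 (the final d is pushed past Y
   one excursion at a time).  Hence intervals of size m+1 correspond bijectively to
   pairs of intervals (P1,Q1), (P2,Q2) of total size m together with a contact p of
   P2, where X Y is P2 cut at p.  The contacts of P are those of P1 and those of P2
   from p on, so summing over p turns x^contact(P2) into x (x^contact(P2) - 1)/(x - 1);
   the heights of Q are those of Q1, those of Q2 raised by one (a factor s), and a
   final 0. *)

Lemma height0 Z : height Z 0 = 0.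
Proof. by rewrite /height take0 big_nil. Qed.

Lemma height_nil i : height [::] i = 0.
Proof. by rewrite /height big_nil. Qed.

Lemma height_cons b Z i : height (b :: Z) i.+1 = step_val b + height Z i.
Proof. by rewrite /height /= big_cons. Qed.

Lemma height_cat A B i : height (A ++ B) i = height A i + height B (i - size A).
Proof.
rewrite /height take_cat; case: ltnP => h; last by rewrite big_cat (take_oversize h).
by rewrite (_ : i - size A = 0)%N ?take0 ?big_nil ?addr0 //; lia.
Qed.

Lemma height_oversize Z i : (size Z <= i)%N -> height Z i = height Z (size Z).
Proof. by move=> h; rewrite /height !take_oversize. Qed.

Lemma height_take Z k i : height (take k Z) i = height Z (minn i k).
Proof.
rewrite /height; case: (leqP i k) => h; first by rewrite take_takel.
by rewrite take_oversize // size_take; case: ifP => //; lia.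
Qed.

Lemma height_drop Z k i : height (drop k Z) i = height Z (k + i) - height Z k.
Proof. by rewrite /height takeD big_cat /= addrAC subrr add0r. Qed.

Lemma heightS Z i : height Z i.+1 =
  height Z i + (if (i < size Z)%N then step_val (nth false Z i) else 0).
Proof.
case: ltnP => h; first by rewrite /height (take_nth false h) -cats1 big_cat big_seq1.
by rewrite addr0 !(@height_oversize Z) //; lia.
Qed.

Lemma heightS_nth x0 Z i : (i < size Z)%N ->
  height Z i.+1 = height Z i + step_val (nth x0 Z i).
Proof. by move=> iZ; rewrite heightS iZ (set_nth_default false). Qed.

Lemma heightS_cases Z i : [\/ height Z i.+1 = height Z i + 1,
  height Z i.+1 = height Z i - 1 | height Z i.+1 = height Z i].
Proof.
by rewrite heightS; case: ifP => _; [case: nth => /=|]; [constructor 1|constructor 2|constructor 3]; lia.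
Qed.

Lemma height_ivt Z a b v : (a <= b)%N -> v < height Z a -> height Z b <= v ->
  exists2 k, (a < k <= b)%N & height Z k = v.
Proof.
elim: b => [|b IH] ab ha hb; first by move: ha; rewrite (_ : a = 0%N); lia.
have [ab'|ba] := ltnP a b.+1; last by move: hb; rewrite (_ : b.+1 = a); lia.
have [hv|hv] := lerP (height Z b) v.
  by have [|k hk <-] := IH _ ha hv; [lia | exists k => //; lia].
by exists b.+1; [lia | case: (heightS_cases Z b); lia].
Qed.

Definition dyck (Z : seq bool) : Prop :=
  (forall i, 0 <= height Z i) /\ height Z (size Z) = 0.

Lemma is_dyckP n Z : is_dyck n Z <-> (size Z = 2 * n)%N /\ dyck Z.
Proof.
split=> [/and3P [/eqP sZ /allP Z0 /eqP Zend] | [sZ [Z0 Zend]]].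
  split=> //; split=> // i; have [iZ|Zi] := leqP i (size Z).
    by apply: Z0; rewrite mem_iota; lia.
  by rewrite height_oversize ?Zend //; lia.
by apply/and3P; split; [rewrite sZ | apply/allP => i _; apply: Z0 | rewrite Zend].
Qed.

Lemma dyck_size_even Z : dyck Z -> exists k, size Z = (2 * k)%N.
Proof.
have height_count i : height Z i = 2%:R * (count id (take i Z))%:R - (size (take i Z))%:R.
  by rewrite /height; elim: (take i Z) => [|[] s IH]; rewrite ?big_nil ?big_cons ?IH /=; lia.
by case=> _ Zend; exists (count id Z); move: Zend; rewrite height_count take_size; lia.
Qed.

Lemma dyck_nil : dyck [::].
Proof. by split => [i|]; rewrite height_nil. Qed.

Lemma dyck_cat A B : dyck A -> dyck B -> dyck (A ++ B).
Proof.
move=> [A0 Aend] [B0 Bend]; split=> [i|].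
  rewrite height_cat; have [iA|Ai] := leqP i (size A).
    by rewrite (_ : i - size A = 0)%N ?height0; [have := A0 i; lia | lia].
  by rewrite (@height_oversize A); [have := B0 (i - size A)%N; lia | lia].
by rewrite height_cat size_cat height_oversize ?Aend ?addKn ?Bend ?add0r //; lia.
Qed.

Lemma dyck_take Z a : dyck Z -> height Z a = 0 -> dyck (take a Z).
Proof.
move=> [Z0 Zend] Za; split=> [i|]; first by rewrite height_take.
rewrite height_take size_take; case: ifP => h; first by rewrite minnn.
by rewrite height_oversize ?Zend //; lia.
Qed.

Lemma dyck_drop Z a : dyck Z -> height Z a = 0 -> dyck (drop a Z).
Proof.
move=> [Z0 Zend] Za; split=> [i|]; first by rewrite height_drop Za subr0.
rewrite height_drop Za subr0 size_drop; have [aZ|Za'] := leqP a (size Z).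
  by rewrite subnKC.
by rewrite height_oversize ?Zend //; lia.
Qed.

(** * Rotations *)

Lemma filter_iota_first (p : pred nat) a n k :
  (forall i, (a <= i < k)%N -> ~~ p i) -> p k -> (a <= k < a + n)%N ->
  [seq i <- iota a n | p i] = k :: [seq i <- iota k.+1 (a + n - k.+1) | p i].
Proof.
move=> before_k pk ak.
rewrite {1}(_ : n = (k - a) + (a + n - k.+1).+1)%N; last by lia.
rewrite iotaD filter_cat subnKC; last by lia.
rewrite (_ : [seq i <- iota a (k - a) | p i] = [::]) /= ?pk //.
rewrite (@eq_in_filter _ _ pred0) ?filter_pred0 // => i.
by rewrite mem_iota => ai; apply/negbTE/before_k; lia.
Qed.

Lemma filter_iota_consE (p : pred nat) a n k r :
  [seq i <- iota a n | p i] = k :: r ->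
  [/\ (a <= k < a + n)%N, p k & forall i, (a <= i < k)%N -> ~~ p i].
Proof.
move=> E; have : k \in [seq i <- iota a n | p i] by rewrite E mem_head.
rewrite mem_filter mem_iota => /andP [pk ak]; split=> // i ai; apply/negP => pi.
have : i \in k :: r by rewrite -E mem_filter pi mem_iota; lia.
have := sorted_filter ltn_trans p (iota_ltn_sorted a n); rewrite E /=.
move=> /(order_path_min ltn_trans) /allP r_gt_k; rewrite in_cons.
by case/orP => [/eqP|/r_gt_k]; lia.
Qed.

Definition swap_excursion (P : seq bool) (j k : nat) : seq bool :=
  take j P ++ drop j.+1 (take k P) ++ false :: drop k P.

Lemma rotateP P j P' : rotate P j = Some P' <->
  exists k, [/\ nth true P j = false /\ nth false P j.+1 = true,
    (j.+2 <= k <= size P)%N, height P k = height P j.+1,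
    (forall i, (j.+2 <= i < k)%N -> height P i != height P j.+1) &
    P' = swap_excursion P j k].
Proof.
rewrite /rotate; split.
  case: ifP => // /andP [/eqP Pj /eqP Pj1].
  case E: [seq _ <- _ | _] => [|k r] // [<-].
  by have [ak /eqP Pk before_k] := filter_iota_consE E; exists k; split => //; lia.
case=> k [[-> ->] jk Pk before_k ->] /=.
by rewrite (@filter_iota_first _ _ _ k) ?Pk //; lia.
Qed.

Lemma rotate_size P j P' : rotate P j = Some P' -> size P' = size P.
Proof.
case/rotateP => k [_ jk _ _ ->]; rewrite /swap_excursion !size_cat /=.
by rewrite size_drop !size_take size_drop; case: ifP; case: ifP; lia.
Qed.

Lemma rotate_valley P j P' : rotate P j = Some P' ->
  [/\ nth true P j = false, nth false P j.+1 = true & (j.+1 < size P)%N].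
Proof. by case/rotateP => k [[Pj Pj1] jk _ _ _]; split=> //; lia. Qed.

Lemma height_swap_excursion P j k i :
  (j.+2 <= k <= size P)%N -> nth true P j = false -> height P k = height P j.+1 ->
  height (swap_excursion P j k) i =
    if (i <= j)%N then height P i else if (i < k)%N then height P i.+1 + 1
    else height P i.
Proof.
move=> jk Pj Pk.
have Pj1 : height P j.+1 = height P j - 1 by rewrite (heightS_nth true) ?Pj //; lia.
rewrite /swap_excursion !height_cat height_take height_drop !height_take.
rewrite size_drop !size_takel; try lia.
have [ij|ji] := leqP i j.
  rewrite (_ : i - j = 0)%N ?addn0 ?subrr ?add0r; last by lia.
  by rewrite sub0n height0 addr0.
rewrite (_ : minn j.+1 k = j.+1); last by lia.
have [ik|ki] := ltnP i k.
  rewrite (_ : minn _ k = i.+1); last by lia.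
  by rewrite (_ : i - j - _ = 0)%N ?height0; lia.
rewrite (_ : minn _ k = k); last by lia.
rewrite (_ : i - j - _ = (i - k).+1)%N; last by lia.
by rewrite height_cons height_drop subnKC //= Pk; lia.
Qed.

Lemma rotate_height_le P j P' i : rotate P j = Some P' -> height P i <= height P' i.
Proof.
case/rotateP => k [[Pj _] jk Pk _ ->]; rewrite height_swap_excursion //.
by do 2 case: ifP => // _; case: (heightS_cases P i); lia.
Qed.

Lemma rotate_heightS P j P' : rotate P j = Some P' -> height P' j.+1 = height P j + 1.
Proof.
case/rotateP => k [[Pj Pj1] jk Pk _ ->]; rewrite height_swap_excursion // ltnn ifT; last by lia.
by rewrite (heightS_nth false) ?Pj1 1?(heightS_nth true) ?Pj //=; lia.
Qed.

Lemma rotate_dyck P j P' : rotate P j = Some P' -> dyck P -> dyck P'.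
Proof.
move=> R [P0 Pend]; split=> [i|]; first by have := rotate_height_le i R; have := P0 i; lia.
rewrite (rotate_size R); case/rotateP: R => k [[Pj _] jk Pk _ ->].
by rewrite height_swap_excursion // !ifF -?Pend //; lia.
Qed.

Lemma take_size_add_cat (T : Type) (A W : seq T) n :
  take (size A + n) (A ++ W) = A ++ take n W.
Proof. by rewrite takeD take_size_cat // drop_size_cat. Qed.

Lemma drop_size_add_cat (T : Type) (A W : seq T) n : drop (size A + n) (A ++ W) = drop n W.
Proof. by rewrite addnC -drop_drop drop_size_cat. Qed.

Lemma height_infix A Z C t : (t <= size Z)%N ->
  height (A ++ Z ++ C) (size A + t) = height A (size A) + height Z t.
Proof.
move=> tZ; rewrite !height_cat addKn (_ : t - size Z = 0)%N ?height0 ?addr0; last by lia.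
by rewrite height_oversize //; lia.
Qed.

Lemma nth_infix (x0 : bool) A Z C t : (t < size Z)%N ->
  nth x0 (A ++ Z ++ C) (size A + t) = nth x0 Z t.
Proof. by move=> tZ; rewrite nth_cat ltnNge leq_addr /= addKn nth_cat tZ. Qed.

Lemma swap_excursion_infix A Z C j k : (j < k <= size Z)%N ->
  swap_excursion (A ++ Z ++ C) (size A + j) (size A + k) = A ++ swap_excursion Z j k ++ C.
Proof.
move=> jk; rewrite /swap_excursion -addnS !take_size_add_cat !drop_size_add_cat.
have dropZC : drop k (Z ++ C) = drop k Z ++ C.
  by rewrite -{1}(cat_take_drop k Z) -catA drop_size_cat // size_takel //; lia.
by rewrite dropZC !takel_cat -?catA //; lia.
Qed.

Lemma rotate_infix A Z C j Z' : rotate Z j = Some Z' ->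
  rotate (A ++ Z ++ C) (size A + j) = Some (A ++ Z' ++ C).
Proof.
case/rotateP => k [[Zj Zj1] jk Zk before_k ->]; apply/rotateP; exists (size A + k)%N.
split; last by rewrite swap_excursion_infix //; lia.
- by rewrite -addnS !nth_infix //; lia.
- by rewrite !size_cat; lia.
- by rewrite -addnS !height_infix //; lia.
move=> i ji; rewrite -(subnKC (_ : size A <= i)%N) -?addnS ?height_infix; try lia.
by rewrite (inj_eq (addrI _)) before_k //; lia.
Qed.

Lemma dyck_rotate_exists Z j : dyck Z -> nth true Z j = false -> nth false Z j.+1 = true ->
  (j.+1 < size Z)%N -> exists Z', rotate Z j = Some Z'.
Proof.
move=> [Z0 Zend] Zj Zj1 jZ; rewrite /rotate Zj Zj1 /=.
case E: [seq _ <- _ | _] => [|k r]; last by eexists.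
have Zj2 : height Z j.+2 = height Z j.+1 + 1 by rewrite heightS jZ Zj1.
have [|||k jk Zk] := @height_ivt Z j.+2 (size Z) (height Z j.+1); try lia.
  by rewrite Zend; have := Z0 j.+1; lia.
have : k \in [seq i <- iota j.+2 (size Z - j.+1) | height Z i == height Z j.+1].
  by rewrite mem_filter Zk eqxx mem_iota; lia.
by rewrite E.
Qed.

Lemma rotate_infix_inv A Z C j y : dyck Z -> (j.+1 < size Z)%N ->
  rotate (A ++ Z ++ C) (size A + j) = Some y -> exists2 Z', rotate Z j = Some Z' & y = A ++ Z' ++ C.
Proof.
move=> dZ jZ R; have [Rj Rj1 _] := rotate_valley R.
have [Z' RZ] : exists Z', rotate Z j = Some Z'.
  apply: dyck_rotate_exists => //.
  - by rewrite -(nth_infix _ A C) //; apply: ltnW.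
  - by rewrite -(nth_infix _ A C) // addnS.
by exists Z' => //; move: (rotate_infix A C RZ); rewrite R => -[].
Qed.

Definition rot_step (x y : seq bool) : Prop := exists j, rotate x j = Some y.

Notation rot_le := (clos_refl_trans_1n _ rot_step).

Lemma rot_le_refl x : rot_le x x.
Proof. exact: rt1n_refl. Qed.

Lemma rotate_rot_le x y j : rotate x j = Some y -> rot_le x y.
Proof. by move=> R; apply: rt1n_trans (rt1n_refl _ _ _); exists j. Qed.

Lemma rot_le_trans x y z : rot_le x y -> rot_le y z -> rot_le x z.
Proof. by elim=> // a b c ab _ IH /IH; apply: rt1n_trans. Qed.

Lemma rot_le_infix A C Z Z' : rot_le Z Z' -> rot_le (A ++ Z ++ C) (A ++ Z' ++ C).
Proof.
elim=> [x|x y z [j R] _ IH]; first exact: rot_le_refl.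
by apply: rt1n_trans IH; exists (size A + j)%N; apply: rotate_infix.
Qed.

Lemma rot_le_height Z W : rot_le Z W -> forall i, height Z i <= height W i.
Proof. by elim=> // x y z [j R] _ IH i; have := rotate_height_le i R; have := IH i; lia. Qed.

Lemma rot_le_size Z W : rot_le Z W -> size W = size Z.
Proof. by elim=> // x y z [j R] _ IH; rewrite IH (rotate_size R). Qed.

Lemma tamari_le_rot_le n (P Q : (2 * n).-tuple bool) :
  is_dyck n P -> tamari_le P Q <-> rot_le (val P) (val Q).
Proof.
move=> dP; split.
  case/connectP => p + ->; elim: p P dP => [|a p IH] P dP /=; first by move=> _; apply: rot_le_refl.
  case/andP => /and3P [_ da /hasP [j _ /eqP R]] pth.
  by apply: rt1n_trans (IH a da pth); exists j.
move Px: (val P) => x; move Qz: (val Q) => z xz.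
elim: xz P Q Px Qz dP => [x0|x0 y z0 [j R] _ IH] P Q Px Qz dP.
  by rewrite (val_inj (etrans Px (esym Qz))) /tamari_le connect0.
have sy : size y == (2 * n)%N by rewrite (rotate_size R) -Px size_tuple.
have dy : is_dyck n (Tuple sy).
  apply/is_dyckP; split; first exact/eqP.
  by apply: (rotate_dyck R); rewrite -Px; case/is_dyckP: dP.
apply: connect_trans (IH (Tuple sy) Q erefl Qz dy).
apply: connect1; rewrite /= dP dy /=; apply/hasP; exists j; last by rewrite Px R.
by rewrite mem_iota Px; have [_ _] := rotate_valley R; lia.
Qed.

Lemma height_wrap X Y i : height X (size X) = 0 ->
  height (true :: X ++ false :: Y) i =
  if i == 0%N then 0 else if (i <= (size X).+1)%N then 1 + height X i.-1
  else height Y (i - (size X).+2).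
Proof.
move=> Xend; case: i => [|i] /=; first by rewrite height0.
rewrite height_cons height_cat; have [iX|Xi] := leqP i (size X).
  by rewrite (_ : i - size X = 0)%N ?height0 ?addr0 ?ifT //; lia.
rewrite ifF ?(height_oversize (ltnW Xi)) ?Xend; last by lia.
by rewrite (_ : i - size X = (i - (size X).+1).+1)%N ?height_cons ?subSS /=; lia.
Qed.

Lemma dyck_wrap X Y : dyck X -> dyck Y -> dyck (true :: X ++ false :: Y).
Proof.
move=> [X0 Xend] [Y0 Yend]; split=> [i|].
  by rewrite height_wrap //; do 2 case: ifP => // _; have := X0 i.-1; lia.
rewrite height_wrap //= size_cat /= ifF; last by lia.
by rewrite (_ : _ - _ = size Y)%N //; lia.
Qed.

Lemma dyck_first_return Z : dyck Z -> Z <> [::] ->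
  exists X Y, [/\ Z = true :: X ++ false :: Y, dyck X & dyck Y].
Proof.
case: Z => [|z Z1] // dZ _; have [Z0 Zend] := dZ.
have zt : z = true by move: (Z0 1%N); rewrite height_cons height0; case: (z) => //=; lia.
subst z.
case E: [seq i <- iota 1 (size (true :: Z1)) | height (true :: Z1) i == 0] => [|f r].
  have : size (true :: Z1) \in [seq i <- iota 1 (size (true :: Z1)) | height (true :: Z1) i == 0].
    by rewrite mem_filter Zend eqxx mem_iota /=; lia.
  by rewrite E.
have [f_in /eqP Zf0 before_f] := filter_iota_consE E.
case: f f_in Zf0 before_f {E} => [|[|g]] f_in; rewrite ?height_cons ?height0 //= => Zf0 before_f.
have Z1_pos i : (i <= g)%N -> 0 <= height Z1 i.
  move=> ig; have Zi : height (true :: Z1) i.+1 != 0 by apply: before_f; lia.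
  by move: Zi (Z0 i.+1); rewrite height_cons /= => /eqP; lia.
have gZ1 : (g < size Z1)%N by move: f_in => /=; lia.
have Z1g : height Z1 g = 0 by have := Z1_pos g (leqnn g); case: (heightS_cases Z1 g); lia.
exists (take g Z1), (drop g.+2 (true :: Z1)); split.
- have Z1g_down : nth false Z1 g = false.
    by move: Zf0; rewrite heightS gZ1 Z1g; case: nth => //=; lia.
  by rewrite /= -{1}(cat_take_drop g Z1) (drop_nth false gZ1) Z1g_down.
- split=> [i|]; first by rewrite height_take; apply: Z1_pos; lia.
  by rewrite size_takel ?height_take ?minnn //; lia.
- by apply: (dyck_drop dZ); rewrite height_cons /=; lia.
Qed.

Lemma dyck_last_return Z : dyck Z -> Z <> [::] ->
  exists Q1 Q2, [/\ Z = Q1 ++ true :: Q2 ++ [:: false], dyck Q1 & dyck Q2].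
Proof.
have [n] := ubnP (size Z); elim: n Z => // n IH Z Zn dZ Z_nil.
have [X [Y [eZ dX dY]]] := dyck_first_return dZ Z_nil; subst Z.
case: Y dY {Z_nil dZ} Zn => [|y Y] dY Zn; first by exists [::], X; split=> //; apply: dyck_nil.
have [|//|//|Q1 [Q2 [-> d1 d2]]] := IH (y :: Y); first by move: Zn; rewrite /= size_cat /=; lia.
exists (true :: X ++ false :: Q1), Q2; split=> //; first by rewrite /= -catA.
exact: dyck_wrap.
Qed.

Lemma first_return_uniq X X' Y Y' : dyck X -> dyck X' ->
  true :: X ++ false :: Y = true :: X' ++ false :: Y' -> X = X' /\ Y = Y'.
Proof.
have size_le A A' B B' : dyck A -> dyck A' ->
    true :: A ++ false :: B = true :: A' ++ false :: B' -> (size A' <= size A)%N.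
  move=> [A0 Aend] [A0' Aend'] /(congr1 (height^~ (size A).+2)) E; rewrite leqNgt.
  apply/negP => AA'; move: E; rewrite !height_wrap //= ifF ?ifT ?subnn ?height0; try lia.
  by have := A0' (size A).+1; lia.
move=> dX dX' E; have eX : size X = size X'.
  by apply/eqP; rewrite eqn_leq (size_le _ _ _ _ dX' dX (esym E)) (size_le _ _ _ _ dX dX' E).
by case: E => /eqP; rewrite eqseq_cat // => /andP [/eqP -> /eqP [->]].
Qed.

Lemma last_return_uniq Q1 Q2 Q1' Q2' : dyck Q1 -> dyck Q2 -> dyck Q1' -> dyck Q2' ->
  Q1 ++ true :: Q2 ++ [:: false] = Q1' ++ true :: Q2' ++ [:: false] ->
  Q1 = Q1' /\ Q2 = Q2'.
Proof.
have size_le A B A' B' : dyck A -> dyck B -> dyck A' ->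
    A ++ true :: B ++ [:: false] = A' ++ true :: B' ++ [:: false] -> (size A' <= size A)%N.
  move=> [_ Aend] [B0 _] [_ Aend'] E; rewrite leqNgt; apply/negP => AA'.
  have := congr1 size E; rewrite !size_cat /= !size_cat /= => sizeE.
  move: E => /(congr1 (height^~ (size A'))); rewrite !height_cat subnn height0 Aend' addr0.
  rewrite height_oversize ?Aend ?add0r; last by lia.
  rewrite (_ : size A' - size A = (size A' - size A).-1.+1)%N ?height_cons ?height_cat; last by lia.
  by rewrite (_ : _ - size B = 0)%N ?height0 /=; [have := B0 (size A' - size A).-1; lia | lia].
move=> d1 d2 d1' d2' E; have eQ1 : size Q1 = size Q1'.
  by apply/eqP; rewrite eqn_leq (size_le _ _ _ _ d1' d2' d1 (esym E)) (size_le _ _ _ _ d1 d2 d1' E).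
move/eqP: E; rewrite eqseq_cat // => /andP [/eqP -> /eqP []].
by rewrite !cats1 => /rcons_inj [->].
Qed.

(** * Intervals along the last return *)

Lemma rotate_down_excursion A B Y : dyck B ->
  rotate (A ++ false :: true :: B ++ false :: Y) (size A) =
  Some (A ++ true :: B ++ false :: false :: Y).
Proof.
move=> dB; have [B0 Bend] := dB.
have R : rotate [:: false, true & B ++ [:: false]] 0 = Some (true :: B ++ [:: false; false]).
  apply/rotateP; exists (size B).+3; split=> //.
  - by rewrite /= size_cat /=; lia.
  - by rewrite height_cons height_wrap //= ifF ?height_nil ?height_cons ?height0 //; lia.
  - move=> [|i] Bi; first by lia.
    rewrite !height_cons height_wrap // height0 ifF ?ifT; try lia.
    by have := B0 i.-1; rewrite /=; lia.
  rewrite /swap_excursion take0 /= take_oversize ?drop_oversize ?size_cat /=; try lia.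
  by rewrite -catA.
by have := rotate_infix A Y R; rewrite addn0 /= -!catA.
Qed.

Lemma rot_le_down_dyck A W : dyck W -> rot_le (A ++ false :: W) (A ++ W ++ [:: false]).
Proof.
have [n] := ubnP (size W); elim: n A W => // n IH A W Wn dW.
case: W Wn dW => [|w W] Wn dW; first exact: rot_le_refl.
case: (dyck_first_return dW) => // B [Y [eW dB dY]].
rewrite eW; apply: rt1n_trans; first by exists (size A); apply: rotate_down_excursion.
have := IH (A ++ true :: B ++ [:: false]) Y; rewrite -!catA /= -!catA /=; apply=> //.
by move: Wn; rewrite eW /= size_cat /=; lia.
Qed.

Lemma rot_le_glue P1 Q1 X Y Q2 : dyck X -> dyck Y -> rot_le P1 Q1 -> rot_le (X ++ Y) Q2 ->
  rot_le (P1 ++ true :: X ++ false :: Y) (Q1 ++ true :: Q2 ++ [:: false]).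
Proof.
move=> dX dY P1Q1 XYQ2.
apply: (@rot_le_trans _ (P1 ++ true :: (X ++ Y) ++ [:: false])).
  by have := rot_le_down_dyck (P1 ++ true :: X) dY; rewrite -!catA.
apply: (@rot_le_trans _ (P1 ++ true :: Q2 ++ [:: false])).
  by have := rot_le_infix P1 [:: false] (rot_le_infix [:: true] [::] XYQ2); rewrite /= !cats0.
by have := rot_le_infix [::] (true :: Q2 ++ [:: false]) P1Q1.
Qed.

Lemma rotate_split x y j a : dyck x -> rotate x j = Some y -> (a <= size x)%N ->
  height x a = 0 -> height y a = 0 ->
  (rotate (take a x) j = Some (take a y) /\ drop a x = drop a y) \/
  (take a x = take a y /\ rotate (drop a x) (j - a) = Some (drop a y)).
Proof.
move=> dx R ax xa ya; have [xj _ jx] := rotate_valley R.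
have [ja|aj] := ltnP j.+1 a.
  have R' : rotate ([::] ++ take a x ++ drop a x) (size (Nil bool) + j) = Some y.
    by rewrite cat_take_drop.
  have [|x' Rx' ->] := rotate_infix_inv (dyck_take dx xa) _ R'; first by rewrite size_takel.
  have sx' : size x' = a by rewrite (rotate_size Rx') size_takel.
  by left; rewrite /= take_size_cat ?drop_size_cat.
have [ja'|{}aj] := ltnP j a.
  have ea : a = j.+1 by lia.
  exfalso; move: xa ya (rotate_heightS R).
  by rewrite ea (heightS_nth true) ?xj //=; lia.
have R' : rotate (take a x ++ drop a x ++ [::]) (size (take a x) + (j - a)) = Some y.
  by rewrite cats0 cat_take_drop size_takel // subnKC.
have [|x' Rx' ->] := rotate_infix_inv (dyck_drop dx xa) _ R'; first by rewrite size_drop; lia.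
have sx : size (take a x) = a by rewrite size_takel.
by right; rewrite cats0 take_size_cat ?drop_size_cat.
Qed.

Lemma rot_le_split Z W a : dyck Z -> rot_le Z W -> (a <= size Z)%N -> height W a = 0 ->
  rot_le (take a Z) (take a W) /\ rot_le (drop a Z) (drop a W).
Proof.
move=> + ZW; elim: ZW => [x|x y z [j R] yz IH] dx ax za; first by split; apply: rot_le_refl.
have dy := rotate_dyck R dx.
have [ay ya] : (a <= size y)%N /\ height y a = 0.
  by rewrite (rotate_size R); split=> //; have := rot_le_height yz a; case: dy => y0 _; have := y0 a; lia.
have xa : height x a = 0.
  by have := rotate_height_le a R; case: dx => x0 _; have := x0 a; lia.
have [take_yz drop_yz] := IH dy ay za.
case: (rotate_split dx R ax xa ya) => [[Rt ->] | [-> Rd]]; split=> //.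
  by apply: rt1n_trans take_yz; exists j.
by apply: rt1n_trans drop_yz; exists (j - a)%N.
Qed.

Lemma rotate_unwrap X Y j y : dyck X -> dyck Y ->
  rotate (true :: X ++ false :: Y) j = Some y ->
  exists X' Y', [/\ y = true :: X' ++ false :: Y', dyck X', dyck Y' & rot_le (X ++ Y) (X' ++ Y')].
Proof.
move=> dX dY R; have [xj xj1 jx] := rotate_valley R.
case: j R xj xj1 jx => [|j] R xj // xj1 jx.
have [jX|Xj] := ltnP j.+1 (size X).
  have [X' RX ->] := @rotate_infix_inv [:: true] X (false :: Y) j y dX jX R.
  exists X', Y; split=> //; first exact: rotate_dyck RX dX.
  exact: rotate_rot_le (rotate_infix [::] Y RX).
have [jX'|Xj'] := ltnP j (size X).
  by move: xj1; rewrite /= (_ : j.+1 = size X) ?nth_cat ?ltnn ?subnn //; lia.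
have [Xj''|{}Xj] := leqP j (size X).
  have ej : j = size X by lia.
  subst j; case: Y dY R xj jx xj1 => [|y0 Y] dY R _ jx xj1; first by move: jx; rewrite /= size_cat /=; lia.
  case: (dyck_first_return dY) => // B [Y' [eY dB dY']].
  have := rotate_down_excursion (true :: X) Y' dB; rewrite -eY /= R => -[->].
  exists (X ++ true :: B ++ [:: false]), Y'; split=> //; first by rewrite -!catA /= -!catA.
    by apply: dyck_cat => //; apply: dyck_wrap => //; apply: dyck_nil.
  by rewrite eY -!catA /= -!catA; apply: rot_le_refl.
have R' : rotate ((true :: X ++ [:: false]) ++ Y ++ [::])
    (size (true :: X ++ [:: false]) + (j - (size X).+1)) = Some y.
  rewrite (_ : _ + _ = j.+1)%N; last by rewrite /= size_cat /=; lia.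
  by rewrite cats0 /= -catA.
have [|Y' RY ->] := rotate_infix_inv dY _ R'; first by move: jx; rewrite /= size_cat /=; lia.
exists X, Y'; split=> //; first by rewrite cats0 /= -catA.
  exact: rotate_dyck RY dY.
by have := rotate_infix X [::] RY; rewrite !cats0; apply: rotate_rot_le.
Qed.

Lemma rot_le_unwrap Z W X Y Q : dyck X -> dyck Y -> dyck Q -> rot_le Z W ->
  Z = true :: X ++ false :: Y -> W = true :: Q ++ [:: false] -> rot_le (X ++ Y) Q.
Proof.
move=> + + dQ ZW; elim: ZW X Y => [x|x y z [j R] _ IH] X Y dX dY ex eW; subst x.
  by case: (first_return_uniq dX dQ eW) => -> ->; rewrite cats0; apply: rot_le_refl.
have [X' [Y' [ey dX' dY' XY]]] := rotate_unwrap dX dY R.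
exact: rot_le_trans XY (IH X' Y' dX' dY' ey eW).
Qed.

(** * The decomposition of intervals *)

Definition intervals (n : nat) : seq (seq bool * seq bool) :=
  [seq (val P, val Q) | P <- [seq P : (2 * n).-tuple bool <- index_enum _ | is_dyck n P],
     Q <- [seq Q : (2 * n).-tuple bool <- index_enum _ | is_dyck n Q && tamari_le P Q]].

Definition is_interval (n : nat) (x : seq bool * seq bool) : Prop :=
  [/\ size x.1 = (2 * n)%N, dyck x.1, dyck x.2 & rot_le x.1 x.2].

Lemma mem_intervals n x : x \in intervals n <-> is_interval n x.
Proof.
split.
  case/allpairsPdep => P [Q [+ + ->]]; rewrite !mem_filter => /andP [dP _] /andP [/andP [dQ PQ] _].
  case/is_dyckP: (dP) => sP dP'; case/is_dyckP: dQ => _ dQ'.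
  by split=> //=; apply/(tamari_le_rot_le _ dP).
case: x => A B [/= sA dA dB AB].
have sB : size B == (2 * n)%N by rewrite (rot_le_size AB) sA.
move/eqP: sA => sA; have dA' : is_dyck n (Tuple sA) by apply/is_dyckP; rewrite (eqP sA).
have dB' : is_dyck n (Tuple sB) by apply/is_dyckP; rewrite (eqP sB).
apply/allpairsPdep; exists (Tuple sA), (Tuple sB).
rewrite !mem_filter dA' dB' !mem_index_enum (tamari_le_rot_le _ dA').2 //.
Qed.

Lemma uniq_intervals n : uniq (intervals n).
Proof.
apply: allpairs_uniq_dep => [||[P1 Q1] [P2 Q2] _ _ /= [/val_inj -> /val_inj ->]] //.
  by rewrite filter_uniq // index_enum_uniq.
by move=> P _; rewrite filter_uniq // index_enum_uniq.
Qed.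

Lemma sum_intervals n (R : nmodType) (F : seq bool * seq bool -> R) :
  \sum_(P : (2 * n).-tuple bool | is_dyck n P)
     \sum_(Q : (2 * n).-tuple bool | is_dyck n Q && tamari_le P Q) F (val P, val Q) =
  \sum_(x <- intervals n) F x.
Proof. by rewrite big_allpairs_dep big_filter; apply: eq_bigr => P _; rewrite big_filter. Qed.

Definition contact_points (P : seq bool) : seq nat :=
  [seq i <- iota 0 (size P).+1 | height P i == 0].

Lemma mem_contact_points P p : p \in contact_points P -> (p <= size P)%N /\ height P p = 0.
Proof. by rewrite mem_filter mem_iota => /andP [/eqP -> ?]; split=> //; lia. Qed.

Definition glue (x1 x2 : seq bool * seq bool) (p : nat) : seq bool * seq bool :=
  (x1.1 ++ true :: take p x2.1 ++ false :: drop p x2.1, x1.2 ++ true :: x2.2 ++ [:: false]).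

Definition glue_data (m : nat) : seq (nat * ((seq bool * seq bool) * ((seq bool * seq bool) * nat))) :=
  [seq (k, r) | k <- iota 0 m.+1,
     r <- [seq (x1, r2) | x1 <- intervals k,
            r2 <- [seq (x2, p) | x2 <- intervals (m - k), p <- contact_points x2.1]]].

Definition glue_datum (d : nat * ((seq bool * seq bool) * ((seq bool * seq bool) * nat))) :
    seq bool * seq bool :=
  glue d.2.1 d.2.2.1 d.2.2.2.

Lemma uniq_glue_data m : uniq (glue_data m).
Proof.
apply: allpairs_uniq_dep => [|k _|]; first exact: iota_uniq.
- apply: allpairs_uniq_dep => [|x1 _|]; first exact: uniq_intervals.
  + apply: allpairs_uniq_dep => [|x2 _|]; first exact: uniq_intervals.
    * by rewrite filter_uniq // iota_uniq.
    * by move=> [? ?] [? ?] _ _ [-> ->].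
  + by move=> [? ?] [? ?] _ _ [-> ->].
- by move=> [? ?] [? ?] _ _ [-> ->].
Qed.

Lemma mem_glue_data m k x1 x2 p :
  (k, (x1, (x2, p))) \in glue_data m <->
  [/\ (k <= m)%N, is_interval k x1, is_interval (m - k) x2 & p \in contact_points x2.1].
Proof.
split.
  case/allpairsPdep => k' [r [+ r_in [ek er]]]; subst k' r; rewrite mem_iota => km.
  case/allpairsPdep: r_in => x1' [r2 [x1_in r2_in [ex1 er2]]]; subst x1' r2.
  case/allpairsPdep: r2_in => x2' [p' [x2_in p_in [ex2 ep]]]; subst x2' p'.
  by split; [lia | apply/mem_intervals | apply/mem_intervals | ].
case=> km /mem_intervals x1_in /mem_intervals x2_in p_in.
apply/allpairsPdep; exists k, (x1, (x2, p)); split=> //; first by rewrite mem_iota; lia.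
apply/allpairsPdep; exists x1, (x2, p); split=> //.
by apply/allpairsPdep; exists x2, p.
Qed.

Lemma rot_le_last_return P Q1 Q2 : dyck P -> dyck Q1 -> dyck Q2 ->
  rot_le P (Q1 ++ true :: Q2 ++ [:: false]) ->
  height P (size Q1) = 0 /\
  exists X Y, [/\ drop (size Q1) P = true :: X ++ false :: Y, dyck X, dyck Y,
    rot_le (take (size Q1) P) Q1 & rot_le (X ++ Y) Q2].
Proof.
move=> dP [Q1_0 Q1end] dQ2 PQ; set Q := Q1 ++ _ in PQ.
have Qa : height Q (size Q1) = 0 by rewrite height_cat subnn height0 addr0.
have Pa : height P (size Q1) = 0.
  by have := rot_le_height PQ (size Q1); case: dP => P0 _; have := P0 (size Q1); lia.
have sPQ : size Q = size P := rot_le_size PQ.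
have [|P1Q1 P2Q2] := rot_le_split dP PQ _ Qa; first by rewrite -sPQ size_cat; lia.
rewrite take_size_cat ?drop_size_cat // in P1Q1 P2Q2.
case: (dyck_first_return (dyck_drop dP Pa)) => [P2_nil|X [Y [P2E dX dY]]].
  by move: (congr1 size P2_nil); rewrite size_drop -sPQ size_cat /=; lia.
by split=> //; exists X, Y; split=> //; exact: rot_le_unwrap dX dY dQ2 P2Q2 P2E _.
Qed.

Lemma glue_inj m : {in glue_data m &, injective glue_datum}.
Proof.
move=> [k [[P1 Q1] [[P2 Q2] p]]] [k' [[P1' Q1'] [[P2' Q2'] p']]].
move=> /mem_glue_data [_ [/= sP1 _ dQ1 P1Q1] [/= _ dP2 dQ2 _] /mem_contact_points [pP2 P2p]].
move=> /mem_glue_data [_ [/= sP1' _ dQ1' P1Q1'] [/= _ dP2' dQ2' _] /mem_contact_points [pP2' P2p']].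
rewrite /glue_datum /glue => -[] /= + eQ.
have [eQ1 eQ2] := last_return_uniq dQ1 dQ2 dQ1' dQ2' eQ; subst Q1' Q2'.
have eP1 : size P1 = size P1' by rewrite -(rot_le_size P1Q1) -(rot_le_size P1Q1').
move/eqP; rewrite eqseq_cat // => /andP [/eqP eP1' /eqP]; subst P1'.
case/(first_return_uniq (dyck_take dP2 P2p) (dyck_take dP2' P2p')) => eX eY.
have eP2 : P2 = P2' by rewrite -(cat_take_drop p P2) eX eY cat_take_drop.
have ek : k = k' by lia.
have ep : p = p' by move: (congr1 size eX); rewrite !size_takel.
by rewrite ek eP2 ep.
Qed.

Lemma glue_interval m d : d \in glue_data m -> is_interval m.+1 (glue_datum d).
Proof.
case: d => k [[P1 Q1] [[P2 Q2] p]] /mem_glue_data.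
case=> km [/= sP1 dP1 dQ1 P1Q1] [/= sP2 dP2 dQ2 P2Q2] /mem_contact_points [/= pP2 P2p].
split=> /=.
- by rewrite size_cat /= size_cat /= size_takel // size_drop; lia.
- by apply: dyck_cat => //; apply: dyck_wrap; [apply: dyck_take | apply: dyck_drop].
- by apply: dyck_cat => //; apply: dyck_wrap => //; apply: dyck_nil.
- by apply: rot_le_glue; rewrite ?cat_take_drop //; [apply: dyck_take | apply: dyck_drop].
Qed.

Lemma interval_glue m x : is_interval m.+1 x -> exists2 d, d \in glue_data m & x = glue_datum d.
Proof.
case: x => P Q [/= sP dP dQ PQ].
have sQ : size Q = (2 * m.+1)%N by rewrite (rot_le_size PQ).
case: (dyck_last_return dQ) => [Q_nil|Q1 [Q2 [eQ dQ1 dQ2]]]; first by rewrite Q_nil in sQ.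
have [k sQ1] := dyck_size_even dQ1.
rewrite eQ in PQ.
have [Pa [X [Y [P2E dX dY P1Q1 XYQ2]]]] := rot_le_last_return dP dQ1 dQ2 PQ.
have sQ12 : (size Q1 + size Q2).+2 = (2 * m.+1)%N by move: sQ; rewrite eQ size_cat /= size_cat /=; lia.
have sXY : (size (X ++ Y)).+2 = (size P - size Q1)%N by rewrite -size_drop P2E /= !size_cat /=; lia.
exists (k, ((take (size Q1) P, Q1), ((X ++ Y, Q2), size X))).
  apply/mem_glue_data; split; first by lia.
  - by split=> //=; [rewrite size_takel; lia | apply: dyck_take].
  - by split=> //=; [lia | apply: dyck_cat].
  rewrite mem_filter mem_iota size_cat height_cat subnn height0 addr0.
  by case: dX => _ ->; rewrite eqxx /=; lia.
by rewrite /glue_datum /glue /= take_size_cat // drop_size_cat // -P2E cat_take_drop eQ.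
Qed.

Lemma perm_intervals_glue m : perm_eq (intervals m.+1) (map glue_datum (glue_data m)).
Proof.
apply: uniq_perm; rewrite ?uniq_intervals ?(map_inj_in_uniq (@glue_inj m)) ?uniq_glue_data //.
move=> x; apply/idP/idP.
  by move/mem_intervals/interval_glue => [d d_in ->]; apply: map_f.
by case/mapP => d d_in ->; apply/mem_intervals; apply: glue_interval.
Qed.

Lemma sum_intervals_succ m (R : nmodType) (F : seq bool * seq bool -> R) :
  \sum_(x <- intervals m.+1) F x =
  \sum_(k < m.+1) \sum_(x1 <- intervals k) \sum_(x2 <- intervals (m - k))
     \sum_(p <- contact_points x2.1) F (glue x1 x2 p).
Proof.
rewrite (perm_big _ (perm_intervals_glue m)) big_map /glue_data big_allpairs_dep.
rewrite (_ : iota 0 m.+1 = index_iota 0 m.+1) ?big_mkord; last by rewrite /index_iota subn0.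
apply: eq_bigr => k _; rewrite big_allpairs_dep; apply: eq_bigr => x1 _.
by rewrite big_allpairs_dep.
Qed.

Lemma contact_cat A B : height A (size A) = 0 ->
  (contact (A ++ B)).+1 = (contact A + contact B)%N.
Proof.
move=> Aend; rewrite /contact size_cat -addnS iotaD count_cat add0n.
have -> : count (fun i => height (A ++ B) i == 0) (iota 0 (size A)) =
          count (fun i => height A i == 0) (iota 0 (size A)).
  apply: eq_in_count => i; rewrite mem_iota height_cat => iA.
  by rewrite (_ : i - size A = 0)%N ?height0 ?addr0 //; lia.
have -> : count (fun i => height (A ++ B) i == 0) (iota (size A) (size B).+1) =
          count (fun i => height B i == 0) (iota 0 (size B).+1).
  rewrite -{1}(addn0 (size A)) iotaDl count_map; apply: eq_count => i /=.
  by rewrite height_cat height_oversize ?Aend ?add0r ?addKn // leq_addr.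
by rewrite -[(size A).+1]addn1 iotaD count_cat /= Aend eqxx; lia.
Qed.

Lemma contact_wrap X : dyck X -> contact (true :: X ++ [:: false]) = 2%N.
Proof.
move=> [X0 Xend]; rewrite /contact (_ : size _ = (size X).+2); last by rewrite /= size_cat addn1.
have iotaS a b : iota a b.+1 = iota a b ++ [:: a + b] by rewrite -addn1 iotaD.
rewrite -[iota 0 _]/([:: 0%N] ++ iota 1 (size X).+2) iotaS !count_cat.
rewrite (@eq_in_count _ _ pred0 (iota 1 _)) ?count_pred0 => [|i]; last first.
  rewrite mem_iota => Xi; rewrite height_wrap // ifF ?ifT //=; [have := X0 i.-1 | |]; lia.
by rewrite /= height0 height_wrap //= ifF ?subnn ?height_nil //; lia.
Qed.

Lemma contact_glue P1 X Y : dyck P1 -> dyck X ->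
  contact (P1 ++ true :: X ++ false :: Y) = (contact P1 + contact Y)%N.
Proof.
move=> [_ P1end] dX; have [_ wend] := dyck_wrap dX dyck_nil.
have := contact_cat Y wend; have := contact_cat ((true :: X ++ [:: false]) ++ Y) P1end.
by rewrite contact_wrap // /= -catA /=; lia.
Qed.

Lemma sum_count_suffix (R : pzSemiRingType) (x : R) (f : pred nat) a n :
  \sum_(p <- [seq i <- iota a n | f i]) x ^+ count f (iota p (a + n - p)) =
  \sum_(i < count f (iota a n)) x ^+ i.+1.
Proof.
elim: n a => [|n IH] a; first by rewrite big_nil big_ord0.
rewrite /= -addSnnS; case: ifP => fa; last by rewrite IH add0n.
by rewrite big_cons IH big_ord_recr addrC addSnnS addKn /= fa.
Qed.

Lemma contact_drop P p : height P p = 0 ->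
  contact (drop p P) = count (fun i => height P i == 0) (iota p (size P - p).+1).
Proof.
move=> Pp; rewrite /contact size_drop -[X in _ = count _ (iota X _)](addn0 p) iotaDl count_map.
by apply: eq_count => i /=; rewrite height_drop Pp subr0.
Qed.

Lemma sum_contact_points (R : pzSemiRingType) (x : R) P :
  \sum_(p <- contact_points P) x ^+ contact (drop p P) = x * \sum_(i < contact P) x ^+ i.
Proof.
rewrite mulr_sumr (eq_bigr (fun i : 'I_ _ => x ^+ i.+1)) => [|i _]; last by rewrite exprS.
rewrite -sum_count_suffix; apply: eq_big_seq => p /mem_contact_points [pP Pp].
by rewrite contact_drop // add0n subSn.
Qed.

Definition height_poly (Q : seq bool) : {poly int} :=
  \sum_(i < (size Q).+1) 'X ^+ `|height Q i|%N.

Lemma height_poly_glue Q1 Q2 : dyck Q1 -> dyck Q2 ->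
  height_poly (Q1 ++ true :: Q2 ++ [:: false]) = height_poly Q1 + 'X * height_poly Q2 + 1.
Proof.
move=> [_ Q1end] [Q2_0 Q2end]; rewrite /height_poly size_cat /= size_cat /=.
rewrite (_ : _.+1 = (size Q1).+1 + ((size Q2).+1 + 1))%N; last by lia.
rewrite !big_split_ord big_ord1 -addrA; congr (_ + (_ + _)).
- apply: eq_bigr => i _; rewrite height_cat (_ : i - size Q1 = 0)%N ?height0 ?addr0 //.
  by case: i => /= i; lia.
- rewrite mulr_sumr; apply: eq_bigr => i _ /=.
  rewrite height_cat height_oversize ?Q1end ?add0r; last by lia.
  rewrite (_ : _ - size Q1 = i.+1)%N; last by lia.
  rewrite height_cons height_cat (_ : i - size Q2 = 0)%N ?height0 ?addr0.
    by rewrite -exprS; congr (_ ^+ _); have := Q2_0 i; rewrite /=; lia.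
  by case: i => /= i; lia.
rewrite /= height_cat height_oversize ?Q1end ?add0r; last by lia.
rewrite (_ : _ - size Q1 = (size Q2).+2)%N; last by lia.
rewrite height_cons height_cat height_oversize ?Q2end ?add0r; last by lia.
by rewrite subSn // subnn height_cons height0.
Qed.

(** * Divided differences and the recurrence *)

Lemma ddiff_unique (p q : bipoly) : p - (p.[1])%:P = q * ('X - 1) -> ddiff p = q.
Proof. by move=> pq; rewrite /ddiff pq Pdiv.IdomainMonic.mulpK // -polyC1 monicXsubC. Qed.

Lemma ddiff_eq (p : bipoly) : p - (p.[1])%:P = ddiff p * ('X - 1).
Proof.
have /factor_theorem [q pq] : root (p - (p.[1])%:P) 1 by rewrite /root !hornerE subrr.
by rewrite (ddiff_unique pq) pq polyC1.
Qed.

Lemma ddiffD (p q : bipoly) : ddiff (p + q) = ddiff p + ddiff q.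
Proof. by apply: ddiff_unique; rewrite mulrDl -!ddiff_eq hornerD rmorphD opprD addrACA. Qed.

Lemma ddiff0 : ddiff 0 = 0.
Proof. by apply: ddiff_unique; rewrite horner0 subr0 mul0r. Qed.

Lemma ddiff_sum I (r : seq I) (P : pred I) (F : I -> bipoly) :
  ddiff (\sum_(i <- r | P i) F i) = \sum_(i <- r | P i) ddiff (F i).
Proof. exact: (big_morph ddiff ddiffD ddiff0). Qed.

Lemma ddiffMC (p : bipoly) (a : {poly int}) : ddiff (p * a%:P) = ddiff p * a%:P.
Proof. by apply: ddiff_unique; rewrite hornerM hornerC rmorphM -mulrBl ddiff_eq mulrAC. Qed.

Lemma ddiffXn c : ddiff ('X ^+ c) = \sum_(i < c) 'X ^+ i.
Proof. by apply: ddiff_unique; rewrite hornerXn expr1n polyC1 subrX1 mulrC. Qed.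

Lemma Fcoef_intervals n : Fcoef n = \sum_(x <- intervals n) 'X ^+ contact x.1.
Proof. exact: (sum_intervals n (fun x => ('X : bipoly) ^+ contact x.1)). Qed.

Lemma Hcoef_intervals n :
  Hcoef n = \sum_(x <- intervals n) 'X ^+ contact x.1 * (height_poly x.2)%:P.
Proof.
rewrite /Hcoef (sum_intervals n (fun x => ('X : bipoly) ^+ contact x.1 *
  \sum_(i < (2 * n).+1) (('X : {poly int}) ^+ `|height x.2 i|%N)%:P)).
apply: eq_big_seq => x /mem_intervals [sP _ _ PQ].
by rewrite /height_poly (rot_le_size PQ) sP rmorph_sum.
Qed.

Lemma sum_glue_contact x1 x2 : dyck x1.1 -> dyck x2.1 ->
  \sum_(p <- contact_points x2.1) ('X : bipoly) ^+ contact (glue x1 x2 p).1 =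
  'X ^+ contact x1.1 * ('X * ddiff ('X ^+ contact x2.1)).
Proof.
move=> dP1 dP2; rewrite ddiffXn -sum_contact_points mulr_sumr.
apply: eq_big_seq => p /mem_contact_points [_ P2p].
by rewrite /= contact_glue ?exprD //; apply: dyck_take.
Qed.

Lemma Fcoef_succ m : Fcoef m.+1 =
  \sum_(k < m.+1) \sum_(x1 <- intervals k) \sum_(x2 <- intervals (m - k))
    'X ^+ contact x1.1 * ('X * ddiff ('X ^+ contact x2.1)).
Proof.
rewrite Fcoef_intervals sum_intervals_succ; apply: eq_bigr => k _.
apply: eq_big_seq => x1 /mem_intervals [_ dP1 _ _]; apply: eq_big_seq => x2 /mem_intervals [_ dP2 _ _].
exact: sum_glue_contact.
Qed.

Lemma Hcoef_succ m : Hcoef m.+1 =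
  \sum_(k < m.+1) \sum_(x1 <- intervals k) \sum_(x2 <- intervals (m - k))
    'X ^+ contact x1.1 * ('X * ddiff ('X ^+ contact x2.1)) *
    ((height_poly x1.2)%:P + ('X : {poly int})%:P * (height_poly x2.2)%:P + 1).
Proof.
rewrite Hcoef_intervals sum_intervals_succ; apply: eq_bigr => k _.
apply: eq_big_seq => x1 /mem_intervals [_ dP1 dQ1 _]; apply: eq_big_seq => x2 /mem_intervals [_ dP2 dQ2 _].
rewrite -sum_glue_contact // big_distrl /=; apply: eq_bigr => p _.
by rewrite height_poly_glue // !rmorphD rmorphM rmorph1.
Qed.

Lemma double_sum_affine (R : comPzRingType) I J (r1 : seq I) (r2 : seq J)
    (a b : I -> R) (c d : J -> R) (s x : R) :
  \sum_(i <- r1) \sum_(j <- r2) a i * (x * c j) * (b i + s * d j + 1) =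
  \sum_(i <- r1) \sum_(j <- r2) a i * (x * c j) +
  s * x * ((\sum_(i <- r1) a i) * (\sum_(j <- r2) c j * d j)) +
  x * ((\sum_(i <- r1) a i * b i) * (\sum_(j <- r2) c j)).
Proof.
rewrite !big_distrlr mulr_sumr [x * _]mulr_sumr -!big_split /=.
apply: eq_bigr => i _; rewrite mulr_sumr [x * _]mulr_sumr -!big_split /=.
by apply: eq_bigr => j _; ring.
Qed.

Unset Implicit Arguments.

Theorem proposition2p2 (n : nat) :
  Hcoef n =
    Fcoef n +
    (if n is m.+1 then
       (('X : {poly int})%:P * 'X) *
         (\sum_(k < m.+1) Fcoef k * ddiff (Hcoef (m - k)%N))
       + 'X * (\sum_(k < m.+1) Hcoef k * ddiff (Fcoef (m - k)%N))
     else 0).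
Proof.
case: n => [|m].
  rewrite addr0; apply: eq_bigr => P _; apply: eq_bigr => Q _.
  by rewrite big_ord1 height0 expr0 polyC1 mulr1.
rewrite Hcoef_succ Fcoef_succ !mulr_sumr -!big_split; apply: eq_bigr => k _ /=.
rewrite double_sum_affine !Fcoef_intervals !Hcoef_intervals !ddiff_sum.
under [X in _ = _ + (_ * (_ * X) + _)]eq_bigr => x _ do rewrite ddiffMC.
by rewrite !mulrA addrA.
Qed.
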